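(* For all integers $k\ge1$ and $n\ge0$, \[ ov_k(n) = nov_k(n) - nov_{2k}(n). \]
   Context: An overpartition of $n$ is a non-increasing sequence of positive integers summing to $n$ in which the first occurrence of each integer may be overlined. For $j\ge1$, $nov_j(n)$ denotes the sum of all non-overlined parts divisible by $j$, summed over all overpartitions of $n$, and $ov_j(n)$ denotes the sum of all overlined parts divisible by $j$, summed over all overpartitions of $n$. *)

From mathcomp Require Import all_boot all_order all_algebra.
Set Implicit Arguments. Unset Strict Implicit. Unset Printing Implicit Defensive.

(* An overpartition is represented as a sequence of pairs (part, overlined?). *)
Definition ovpart := (nat * bool)%type.

(* s is an overpartition of n: parts positive, non-increasing, summing to n,
   and an overlined part is always the first occurrence of its value. *)
Definition is_overpartition (n : nat) (s : seq ovpart) : bool :=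
  [&& all (fun x => 0 < x.1) s,
      sorted geq (map fst s),
      sumn (map fst s) == n &
      all (fun i => (nth (0, false) s i).2 ==>
                    ((i == 0) || ((nth (0, false) s i.-1).1 != (nth (0, false) s i).1)))
          (iota 0 (size s))].

Definition nov_parts (j : nat) (s : seq ovpart) : nat :=
  \sum_(x <- s | ~~ x.2 && (j %| x.1)) x.1.
Definition ov_parts (j : nat) (s : seq ovpart) : nat :=
  \sum_(x <- s | x.2 && (j %| x.1)) x.1.

(* Every overpartition of n
   has length at most n and parts at most n, so it arises from exactly one
   pair (m, t) with m < n.+1 and t : m.-tuple ('I_n.+1 * bool). *)
Definition ovp_of_tuple (n m : nat) (t : m.-tuple ('I_n.+1 * bool)) : seq ovpart :=
  [seq (nat_of_ord x.1, x.2) | x <- t].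

Definition sum_overpartitions (n : nat) (F : seq ovpart -> nat) : nat :=
  \sum_(m < n.+1) \sum_(t : m.-tuple ('I_n.+1 * bool)
                        | is_overpartition n (ovp_of_tuple t))
     F (ovp_of_tuple t).

Definition nov (j n : nat) : nat := sum_overpartitions n (nov_parts j).
Definition ov (j n : nat) : nat := sum_overpartitions n (ov_parts j).

From mathcomp Require Import all_boot all_order all_algebra zify.

(** For a part size v, let N_v(n) and O_v(n) be the total numbers of non-overlined
   and of overlined parts equal to v over all overpartitions of n, and let p(n)
   be the number of overpartitions of n.  Adding a part v gives the recurrences
   N_v(n) = N_v(n - v) + p(n - v) and O_v(n) + O_v(n - v) = p(n - v), from which
   N_v = O_v + 2 N_2v follows by induction with step 2v; in generating functions
   this is q^v/(1 - q^v) - q^v/(1 + q^v) = 2 q^2v/(1 - q^2v).  Multiplying by v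
   and summing over the multiples v of k gives ov_k + nov_2k = nov_k, because
   2v runs exactly over the multiples of 2k. *)

Definition ovp_next (x y : ovpart) : bool := (y.1 <= x.1) && (y.2 ==> (x.1 != y.1)).

(* Larger parts first and, among equal parts, the overlined one first: inserting
   a part into an overpartition is sorting for this total order. *)
Definition ovp_le (x y : ovpart) : bool := (y.1 < x.1) || (x.1 == y.1) && (y.2 ==> x.2).

Lemma ovp_next_trans : transitive ovp_next.
Proof. by move=> [a b] [c d] [e f]; rewrite /ovp_next /=; case: b d f => [] [] [] /=; lia. Qed.

Lemma ovp_le_trans : transitive ovp_le.
Proof. by move=> [a b] [c d] [e f]; rewrite /ovp_le /=; case: b d f => [] [] [] /=; lia. Qed.

Lemma ovp_le_total : total ovp_le.
Proof. by move=> [a b] [c d]; rewrite /ovp_le /=; case: b d => [] [] /=; lia. Qed.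

Lemma ovp_le_anti : antisymmetric ovp_le.
Proof. by move=> [a b] [c d]; rewrite /ovp_le /=; case: b d => [] [] /= H; congr pair; lia. Qed.

Lemma ovp_nextE x y : ovp_next x y = ovp_le x y && (x.2 ==> (y != x)).
Proof.
by case: x y => [a b] [c d]; rewrite /ovp_next /ovp_le xpair_eqE; case: b d => [] [] /=; lia.
Qed.

Lemma sorted_ovp_nextE s :
  sorted ovp_next s = sorted ovp_le s && uniq [seq x <- s | x.2].
Proof.
elim: s => //= x s IHs.
rewrite (path_sortedE ovp_next_trans) (path_sortedE ovp_le_trans) IHs.
rewrite (eq_all (ovp_nextE x)) all_predI.
case: x => a [] /=; last by rewrite all_predT andbT andbA.
rewrite mem_filter /= -has_pred1 -all_predC.
by case: (all (ovp_le _) s); case: (sorted _ s); case: (all (predC _) s); rewrite ?andbF.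
Qed.

Lemma sorted_ovp_next (s : seq ovpart) (x0 := (0, false)) :
  sorted ovp_next s =
  sorted geq (map fst s) &&
  all (fun i => (nth x0 s i).2 ==> ((i == 0) || ((nth x0 s i.-1).1 != (nth x0 s i).1)))
      (iota 0 (size s)).
Proof.
apply/(sortedP x0)/andP => [Hs | [/(sortedP 0) Hle /allP Hov] i Hi].
  split; last first.
  by apply/allP => -[|j] //=; rewrite ?implybT // mem_iota => /(Hs j) /andP[].
  apply/(sortedP 0) => i; rewrite size_map => Hi.
  by rewrite !(nth_map x0) ?(ltnW Hi) //; case/andP: (Hs i Hi).
have /= := Hov i.+1; rewrite mem_iota Hi => /(_ isT) Hi1.
have := Hle i; rewrite size_map !(nth_map x0) ?(ltnW Hi) // => /(_ Hi) Hi2.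
by apply/andP.
Qed.

Lemma is_overpartitionE n s : is_overpartition n s =
  [&& all (fun x => 0 < x.1) s, sorted ovp_next s & sumn (map fst s) == n].
Proof.
rewrite /is_overpartition sorted_ovp_next.
by case: (sorted _ _) (all _ (iota _ _)) => [] []; rewrite ?andbF ?andbT.
Qed.

Definition overpartitions (n : nat) : seq (seq ovpart) :=
  [seq s <- flatten [seq [seq ovp_of_tuple t | t : m.-tuple ('I_n.+1 * bool)]
                    | m <- iota 0 n.+1]
   | is_overpartition n s].

Lemma sum_overpartitionsE n F :
  sum_overpartitions n F = \sum_(s <- overpartitions n) F s.
Proof.
rewrite big_filter big_flatten big_map -{1}(subn0 n.+1) -/(index_iota 0 n.+1) big_mkord.
by apply: eq_bigr => m _; rewrite big_image_cond.
Qed.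

Lemma size_ovp_of_tuple n m (t : m.-tuple ('I_n.+1 * bool)) : size (ovp_of_tuple t) = m.
Proof. by rewrite size_map size_tuple. Qed.

Lemma ovp_of_tuple_inj n m : injective (@ovp_of_tuple n m).
Proof.
move=> t1 t2 /inj_map eq_t; apply/val_inj/eq_t.
by move=> [a b] [c d] [/val_inj -> ->].
Qed.

Lemma overpartitions_uniq n : uniq (overpartitions n).
Proof.
(* [set] protects the [n.+1] of ['I_n.+1] from the induction on the range. *)
apply/filter_uniq; set tuples := fun m => [seq ovp_of_tuple t | t : m.-tuple ('I_n.+1 * bool)].
elim: n.+1 0 => //= b IHb a.
rewrite cat_uniq IHb map_inj_uniq ?enum_uniq ?andbT //=; last exact: ovp_of_tuple_inj.
apply/hasPn => s /flattenP[l /mapP[m]]; rewrite mem_iota => /andP[lt_am _] -> /mapP[t _ ->].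
apply/mapP => -[t' _ /(congr1 size)]; rewrite !size_ovp_of_tuple => eq_m.
by rewrite eq_m ltnn in lt_am.
Qed.

Lemma part_le_sumn {s : seq ovpart} {x : ovpart} : x \in s -> x.1 <= sumn (map fst s).
Proof. by elim: s => //= y s IHs; rewrite inE => /predU1P[-> | /IHs]; lia. Qed.

Lemma size_le_sumn (s : seq ovpart) : all (fun x => 0 < x.1) s -> size s <= sumn (map fst s).
Proof. by elim: s => //= x s IHs /andP[x_gt0 /IHs]; lia. Qed.

Lemma mem_overpartitions n s : (s \in overpartitions n) = is_overpartition n s.
Proof.
rewrite mem_filter andb_idr // => ovp_s.
move: (ovp_s); rewrite is_overpartitionE => /and3P[pos_s _ /eqP sum_s].
apply/flattenP; exists [seq ovp_of_tuple t | t : (size s).-tuple ('I_n.+1 * bool)].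
  by apply/mapP; exists (size s); rewrite // mem_iota ltnS -sum_s size_le_sumn.
pose t := map_tuple (fun x : ovpart => (inord x.1 : 'I_n.+1, x.2)) (in_tuple s).
apply/mapP; exists t; first by rewrite mem_enum.
rewrite /ovp_of_tuple -map_comp map_id_in // => -[a b] xs /=.
by rewrite inordK // ltnS -sum_s (part_le_sumn xs).
Qed.

Lemma big_seq_bij {R : Type} {idx : R} (op : Monoid.com_law idx) (T : eqType)
    (r1 r2 : seq T) (P1 P2 : pred T) (f g : T -> T) (F : T -> R) :
    uniq r1 -> uniq r2 ->
    {in r1, forall x, P1 x -> [/\ f x \in r2, P2 (f x) & g (f x) = x]} ->
    {in r2, forall y, P2 y -> [/\ g y \in r1, P1 (g y) & f (g y) = y]} ->
  \big[op/idx]_(x <- r1 | P1 x) F x = \big[op/idx]_(y <- r2 | P2 y) F (g y).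
Proof.
move=> uniq_r1 uniq_r2 f_in g_in.
rewrite -big_filter -[RHS]big_filter -(big_map g xpredT F); apply/perm_big/uniq_perm.
- exact: filter_uniq.
- rewrite map_inj_in_uniq ?filter_uniq // => y1 y2.
  rewrite !mem_filter => /andP[P2y1 y1_r2] /andP[P2y2 y2_r2] eq_g.
  by have [_ _ <-] := g_in y1 y1_r2 P2y1; have [_ _ <-] := g_in y2 y2_r2 P2y2; rewrite eq_g.
move=> x; rewrite mem_filter; apply/andP/mapP => [[P1x x_r1] | [y]].
  by have [fx_r2 P2fx <-] := f_in x x_r1 P1x; exists (f x); rewrite // mem_filter P2fx.
by rewrite mem_filter => /andP[P2y y_r2] ->; have [] := g_in y y_r2 P2y.
Qed.

Lemma big_overpartitions_bij {R : Type} {idx : R} (op : Monoid.com_law idx) n m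
    (P1 P2 : pred (seq ovpart)) (f g : seq ovpart -> seq ovpart) (F : seq ovpart -> R) :
    (forall s, is_overpartition n s -> P1 s ->
       [/\ is_overpartition m (f s), P2 (f s) & g (f s) = s]) ->
    (forall s, is_overpartition m s -> P2 s ->
       [/\ is_overpartition n (g s), P1 (g s) & f (g s) = s]) ->
  \big[op/idx]_(s <- overpartitions n | P1 s) F s =
  \big[op/idx]_(s <- overpartitions m | P2 s) F (g s).
Proof.
move=> f_ovp g_ovp; apply: big_seq_bij; rewrite ?overpartitions_uniq // => s.
  by rewrite !mem_overpartitions; apply: f_ovp.
by rewrite !mem_overpartitions; apply: g_ovp.
Qed.

Lemma overpartition_sorted n s : is_overpartition n s -> sorted ovp_le s.
Proof. by rewrite is_overpartitionE sorted_ovp_nextE => /and3P[_ /andP[]]. Qed.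

Lemma count_overlined {n} v {s} :
  is_overpartition n s -> count_mem (v, true) s = ((v, true) \in s).
Proof.
rewrite is_overpartitionE sorted_ovp_nextE => /and3P[_ /andP[_ uniq_s] _].
have -> : (v, true) \in s = ((v, true) \in [seq x <- s | x.2]) by rewrite mem_filter.
rewrite -(count_uniq_mem _ uniq_s) count_filter; apply: eq_count => -[a b] /=.
by rewrite xpair_eqE; case: b; rewrite ?andbT ?andbF.
Qed.

Lemma sumn_rem {s : seq ovpart} {x : ovpart} :
  x \in s -> sumn (map fst s) = x.1 + sumn (map fst (rem x s)).
Proof. by move=> xs; rewrite (perm_sumn (perm_map fst (perm_to_rem xs))). Qed.

Lemma rem_overpartition n x s :
  is_overpartition n s -> x \in s -> is_overpartition (n - x.1) (rem x s).
Proof.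
rewrite !is_overpartitionE => /and3P[pos_s sorted_s /eqP sum_s] xs.
rewrite (subseq_sorted ovp_next_trans (rem_subseq x s) sorted_s).
rewrite -sum_s (sumn_rem xs) addKn eqxx !andbT.
by apply/allP => y /mem_rem; apply: (allP pos_s).
Qed.

Definition ovp_insert (x : ovpart) (s : seq ovpart) : seq ovpart := sort ovp_le (x :: s).

Lemma perm_ovp_insert x s : perm_eq (ovp_insert x s) (x :: s).
Proof. by rewrite perm_sort. Qed.

Lemma mem_ovp_insert x s : x \in ovp_insert x s.
Proof. by rewrite mem_sort mem_head. Qed.

Lemma count_ovp_insert x y s : count_mem y (ovp_insert x s) = (x == y) + count_mem y s.
Proof. by rewrite (permP (perm_ovp_insert x s)). Qed.

Lemma ovp_insert_overpartition n (x : ovpart) s :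
    is_overpartition n s -> 0 < x.1 -> x.2 ==> (x \notin s) ->
  is_overpartition (n + x.1) (ovp_insert x s).
Proof.
rewrite !is_overpartitionE !sorted_ovp_nextE (sort_sorted ovp_le_total).
move=> /and3P[pos_s /andP[_ uniq_s] /eqP sum_s] x_gt0 x_new.
have perm_xs := perm_ovp_insert x s.
rewrite (perm_uniq (perm_filter _ perm_xs)) (perm_sumn (perm_map fst perm_xs)) /=.
rewrite sum_s addnC eqxx andbT; apply/andP; split.
  by apply/allP => y; rewrite (perm_mem perm_xs) inE => /predU1P[-> | /(allP pos_s)].
by case: ifP => //= x_ov; rewrite uniq_s mem_filter x_ov (negbTE (implyP x_new x_ov)).
Qed.

Lemma ovp_insert_rem x s : sorted ovp_le s -> x \in s -> ovp_insert x (rem x s) = s.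
Proof.
move=> sorted_s xs; apply: (sorted_eq ovp_le_trans ovp_le_anti) => //.
  exact: sort_sorted ovp_le_total _.
by rewrite perm_sort perm_sym perm_to_rem.
Qed.

Lemma rem_ovp_insert (x : ovpart) s : sorted ovp_le s -> rem x (ovp_insert x s) = s.
Proof.
move=> sorted_s; apply: (sorted_eq ovp_le_trans ovp_le_anti) => //.
  exact: (subseq_sorted ovp_le_trans (rem_subseq _ _) (sort_sorted ovp_le_total (x :: s))).
rewrite -(perm_cons x); apply: perm_trans _ (perm_ovp_insert x s).
by rewrite perm_sym perm_to_rem // mem_ovp_insert.
Qed.

Definition ovp_number (n : nat) : nat := size (overpartitions n).

Definition nov_mult (v n : nat) : nat :=
  \sum_(s <- overpartitions n) count_mem (v, false) s.

Definition ov_mult (v n : nat) : nat :=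
  \sum_(s <- overpartitions n) count_mem (v, true) s.

Lemma count_part_small n v b s :
  n < v -> is_overpartition n s -> count_mem (v, b) s = 0.
Proof.
rewrite is_overpartitionE => lt_nv /and3P[_ _ /eqP sum_s].
by apply/count_memPn/negP => /part_le_sumn /=; rewrite sum_s leqNgt lt_nv.
Qed.

Lemma nov_mult_small {v n} : n < v -> nov_mult v n = 0.
Proof.
move=> lt_nv; rewrite /nov_mult big1_seq // => s.
by rewrite mem_overpartitions; apply: count_part_small.
Qed.

Lemma ov_mult_small {v n} : n < v -> ov_mult v n = 0.
Proof.
move=> lt_nv; rewrite /ov_mult big1_seq // => s.
by rewrite mem_overpartitions; apply: count_part_small.
Qed.

(* Adding a non-overlined part v maps the overpartitions of n - v bijectively onto
   those of n containing such a part, and raises its multiplicity by one. *)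
Lemma nov_mult_rec {v n} :
  0 < v -> v <= n -> nov_mult v n = nov_mult v (n - v) + ovp_number (n - v).
Proof.
move=> v_gt0 le_vn; rewrite /nov_mult (bigID (fun s => (v, false) \in s)) /=.
rewrite [X in _ + X]big1 ?addn0 => [|s /count_memPn //].
rewrite (big_overpartitions_bij _ n (n - v) _ xpredT (rem (v, false)) (ovp_insert (v, false))).
- rewrite /ovp_number -sum1_size -big_split /=; apply: eq_bigr => s _.
  by rewrite count_ovp_insert eqxx addnC.
- move=> s ovp_s vs; split=> //; first exact: rem_overpartition.
  exact/ovp_insert_rem/vs/overpartition_sorted/ovp_s.
move=> s ovp_s _; split; last exact/rem_ovp_insert/overpartition_sorted/ovp_s.
  by have := ovp_insert_overpartition _ (v, false) _ ovp_s v_gt0 isT; rewrite subnK.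
exact: mem_ovp_insert.
Qed.

Lemma overlined_notin_rem n v s :
  is_overpartition n s -> (v, true) \notin rem (v, true) s.
Proof.
move=> ovp_s; have [vs | /negbTE vs] := boolP ((v, true) \in s); last first.
  by rewrite rem_id ?vs.
have := count_overlined v ovp_s; rewrite (permP (perm_to_rem vs)) /= eqxx vs.
by move/eqP; rewrite eqSS -has_pred1 has_count => /eqP ->.
Qed.

(* Adding an overlined part v maps the overpartitions of n - v without one
   bijectively onto the overpartitions of n with one. *)
Lemma ov_mult_rec {v n} :
  0 < v -> v <= n -> ov_mult v n + ov_mult v (n - v) = ovp_number (n - v).
Proof.
move=> v_gt0 le_vn; set has_v := fun s : seq ovpart => (v, true) \in s.
have ov_multE m : ov_mult v m = count has_v (overpartitions m).
  rewrite -sum1_count big_mkcond /=; apply: eq_big_seq => s.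
  by rewrite mem_overpartitions => /count_overlined ->; rewrite /has_v; case: (_ \in _).
rewrite !ov_multE /ovp_number -(count_predC has_v) addnC; congr (_ + _).
rewrite -!sum1_count (big_overpartitions_bij _ n (n - v) _ (predC has_v)
                       (rem (v, true)) (ovp_insert (v, true))) //.
- move=> s ovp_s vs; split; first exact: rem_overpartition.
    exact: overlined_notin_rem ovp_s.
  exact/ovp_insert_rem/vs/overpartition_sorted/ovp_s.
move=> s ovp_s vs; split; last exact/rem_ovp_insert/overpartition_sorted/ovp_s.
  by have := ovp_insert_overpartition _ (v, true) _ ovp_s v_gt0 vs; rewrite subnK.
exact: mem_ovp_insert.
Qed.

Lemma nov_mult_double v n :
  0 < v -> nov_mult v n = ov_mult v n + 2 * nov_mult (2 * v) n.
Proof.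
move=> v_gt0; elim/ltn_ind: n => n IHn.
have [lt_nv | le_vn] := ltnP n v.
  by rewrite ov_mult_small ?nov_mult_small //; lia.
have ov_n := ov_mult_rec v_gt0 le_vn; have nov_n := nov_mult_rec v_gt0 le_vn.
have [lt_n2v | le_2vn] := ltnP n (2 * v).
  have lt_nv_v : n - v < v by lia.
  move: ov_n nov_n.
  by rewrite (nov_mult_small lt_n2v) (ov_mult_small lt_nv_v) (nov_mult_small lt_nv_v); lia.
have le_v_nv : v <= n - v by lia.
have := ov_mult_rec v_gt0 le_v_nv; have := nov_mult_rec v_gt0 le_v_nv.
have v2_gt0 : 0 < 2 * v by lia.
have lt_n2v_n : n - 2 * v < n by lia.
have := nov_mult_rec v2_gt0 le_2vn; have := IHn _ lt_n2v_n.
rewrite -subnDA addnn -mul2n; lia.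
Qed.

Lemma sum_parts_by_value (b : bool) j B (s : seq ovpart) :
    all (fun x => x.1 < B) s ->
  \sum_(x <- s | (x.2 == b) && (j %| x.1)) x.1 =
  \sum_(0 <= v < B | j %| v) v * count_mem (v, b) s.
Proof.
elim: s => [_ | [a c] s IHs /andP[/= lt_aB /IHs {}IHs]].
  by rewrite big_nil big1 // => v _; rewrite muln0.
rewrite big_cons IHs /=; under [RHS]eq_bigr do rewrite mulnDr.
rewrite big_split /=.
suff -> : \sum_(0 <= v < B | j %| v) v * ((a, c) == (v, b)) =
          if (c == b) && (j %| a) then a else 0.
  by case: ifP.
rewrite big_mkcond (bigD1_seq a) ?mem_index_iota ?iota_uniq //= big1 => [|v neq_va].
  by rewrite xpair_eqE eqxx addn0; case: (c == b); case: (j %| a); rewrite /= ?muln1 ?muln0.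
have /negbTE -> : (a, c) != (v, b) by apply: contraNneq neq_va => -[->].
by rewrite muln0; case: ifP.
Qed.

Lemma overpartition_parts_lt {n B s} :
  n < B -> is_overpartition n s -> all (fun x => x.1 < B) s.
Proof.
rewrite is_overpartitionE => lt_nB /and3P[_ _ /eqP sum_s].
by apply/allP => x /part_le_sumn; rewrite sum_s => /leq_ltn_trans; apply.
Qed.

Lemma sum_overpartitions_by_value (b : bool) j {n B} :
    n < B ->
  \sum_(s <- overpartitions n) \sum_(x <- s | (x.2 == b) && (j %| x.1)) x.1 =
  \sum_(0 <= v < B | j %| v) v * \sum_(s <- overpartitions n) count_mem (v, b) s.
Proof.
move=> lt_nB; under eq_big_seq => s do
  rewrite mem_overpartitions => /(overpartition_parts_lt lt_nB) /sum_parts_by_value ->.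
by rewrite exchange_big; apply: eq_bigr => v _; rewrite big_distrr.
Qed.

Lemma nov_by_value j {n B} :
  n < B -> nov j n = \sum_(0 <= v < B | j %| v) v * nov_mult v n.
Proof.
move=> lt_nB; rewrite /nov sum_overpartitionsE -(sum_overpartitions_by_value false j lt_nB).
by apply: eq_bigr => s _; apply: eq_bigl => x; rewrite eqbF_neg.
Qed.

Lemma ov_by_value j {n B} :
  n < B -> ov j n = \sum_(0 <= v < B | j %| v) v * ov_mult v n.
Proof.
move=> lt_nB; rewrite /ov sum_overpartitionsE -(sum_overpartitions_by_value true j lt_nB).
by apply: eq_bigr => s _; apply: eq_bigl => x; rewrite eqb_id.
Qed.

Lemma big_double_dvdn {R : Type} {idx : R} (op : Monoid.com_law idx) k B (F : nat -> R) :
  \big[op/idx]_(0 <= v < B.*2 | 2 * k %| v) F v =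
  \big[op/idx]_(0 <= w < B | k %| w) F (2 * w).
Proof.
rewrite big_mkcond [RHS]big_mkcond; elim: B => [|B IHB]; first by rewrite !big_geq.
rewrite doubleS !big_nat_recr //=.
have /negbTE -> : ~~ (2 * k %| (B.*2).+1).
  by apply/negP => /(dvdn_trans (dvdn_mulr k (dvdnn 2))); rewrite dvdn2 /= odd_double.
by rewrite Monoid.mulm1 IHB -mul2n dvdn_pmul2l.
Qed.

Lemma ov_add_nov_double k n : ov k n + nov (2 * k) n = nov k n.
Proof.
have lt_n_2n : n < n.+1.*2 by rewrite -addnn ltn_addr.
rewrite (ov_by_value k (ltnSn n)) (nov_by_value k (ltnSn n)) (nov_by_value (2 * k) lt_n_2n).
rewrite big_double_dvdn -big_split /=; apply: eq_bigr => v _.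
have [-> | v_gt0] := posnP v; first by rewrite !mul0n.
by rewrite (nov_mult_double v n v_gt0) mulnDr mulnCA mulnA.
Qed.

Local Open Scope ring_scope.

Theorem mainTheorem3 (k n : nat) (hk : (1 <= k)%N) :
  (ov k n)%:Z = (nov k n)%:Z - (nov (2 * k) n)%:Z.
Proof.
by rewrite -ov_add_nov_double PoszD GRing.addrK.
Qed.
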